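(* Let $n\ge2$ and let $\xi_n:S^1\to M_n(\mathbb C)$ be given by $\xi_n(z)_{ij}=z^{j-i}$ ($1\le i,j\le n$). Then $\xi_n$ is entangled in $C(S^1)^{(n)}\otimes_{\min}C(S^1)_{(n)}$: it is positive there, but there do not exist $k\in\mathbb N$, positive semidefinite Toeplitz matrices $t_1,\dots,t_k\in C(S^1)^{(n)}$ and functions $f_1,\dots,f_k\in C(S^1)_{(n)}$ with $f_j(z)\ge0$ for all $z$, such that $\xi_n=\sum_{j=1}^k t_j\otimes f_j$.
   Context: $C(S^1)^{(n)}\subseteq M_n(\mathbb C)$ is the space of Toeplitz matrices $[\tau_{k-\ell}]$. $C(S^1)_{(n)}$ is the operator system of continuous functions $f$ on the unit circle $S^1$ with Fourier coefficients $\hat f(k)=0$ for $|k|\ge n$, positivity being pointwise. $C(S^1)^{(n)}\otimes_{\min}C(S^1)_{(n)}$ is identified with continuous functions $F:S^1\to C(S^1)^{(n)}$ with entries in $C(S^1)_{(n)}$ (via $t\otimes f\leftrightarrow z\mapsto f(z)t$), positive iff $F(z)$ is positive semidefinite for each $z$. *)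

From mathcomp Require Import all_boot all_order all_algebra.
From mathcomp Require Import complex.
From mathcomp Require Import reals.
Set Implicit Arguments. Unset Strict Implicit. Unset Printing Implicit Defensive.
Import Order.TTheory GRing.Theory Num.Theory.
Local Open Scope ring_scope.

Section Defs.
Variable R : realType.
Local Notation C := (R[i]).

Definition adjmx (n : nat) (A : 'M[C]_n) : 'M[C]_n := (map_mx conjc A)^T.

Definition psd (n : nat) (A : 'M[C]_n) : Prop :=
  adjmx A = A /\ forall v : 'cV[C]_n, 0 <= ((map_mx conjc v)^T *m A *m v) 0 0.

Definition toeplitz (n : nat) (t : 'M[C]_n) : Prop :=
  exists tau : int -> C, forall i j : 'I_n, t i j = tau (i%:Z - j%:Z).

Definition on_circle (z : C) : Prop := `|z| = 1.

(* C(S^1)_(n): (continuous) functions on S^1 whose Fourier coefficients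
   vanish for |k| >= n, i.e. trigonometric polynomials sum_{|k|<n} c_k z^k *)
Definition trig_poly (n : nat) (f : C -> C) : Prop :=
  exists c : int -> C, forall z, on_circle z ->
    f z = \sum_(0 <= k < (2 * n).-1) c (k%:Z - n.-1%:Z) * z ^ (k%:Z - n.-1%:Z).

Definition xi (n : nat) (z : C) : 'M[C]_n :=
  \matrix_(i < n, j < n) z ^ (j%:Z - i%:Z).
End Defs.

(* Each xi_n(z) is the rank-one positive matrix w w^* with w_i = conj(z)^i, and
   the vector v = e_1 - z e_0 lies in its kernel.  If xi_n = sum_j f_j t_j with
   t_j positive semidefinite and f_j >= 0, then every t_j with f_j(z) <> 0 also
   kills v, so (t_j)_01 = z (t_j)_00.  Hence a summand with (t_j)_00 <> 0 can be
   active at only one point of the circle; at a point avoided by all k summands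
   the (0,0) entry of the sum vanishes, whereas xi_n(z)_00 = 1. *)
From mathcomp Require Import all_boot all_order all_algebra.
From mathcomp Require Import complex.
From mathcomp Require Import reals.
From mathcomp Require Import ring lra.
Import Order.TTheory GRing.Theory Num.Theory.
Local Open Scope ring_scope.
Set Implicit Arguments. Unset Strict Implicit. Unset Printing Implicit Defensive.

Lemma exists_notin_codom (T : eqType) (I J : finType) (f : I -> T) (g : J -> T) :
  injective g -> (#|I| < #|J|)%N -> exists j, g j \notin codom f.
Proof.
move=> g_inj ltIJ; apply/existsP; rewrite -negb_forall.
apply: contraTN ltIJ => /forallP gf; rewrite -leqNgt cardE -(size_map g) -(size_codom f).
apply: uniq_leq_size; first by rewrite (map_inj_uniq g_inj) enum_uniq.
by move=> _ /mapP[j _ ->].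
Qed.

Section Circle.
Variable R : realType.
Local Notation C := R[i].
Implicit Types (z : C) (x : R).

Lemma circle_neq0 z : on_circle z -> z != 0.
Proof. by rewrite -normr_eq0 => ->; rewrite oner_eq0. Qed.

Lemma circle_conj z : on_circle z -> z^*%C = z^-1.
Proof. by move=> zS; rewrite invc_norm zS expr1n invr1 mul1r. Qed.

Lemma ger0_conjc z : 0 <= z -> z^*%C = z.
Proof. by move=> /ger0_real /complex_realP[x ->]; rewrite conjc_real. Qed.

Lemma Im1_neq0 x : (x +i* 1)%C != 0.
Proof. by apply/eqP => /(congr1 (@complex.Im R)) /= /eqP; rewrite oner_eq0. Qed.

Definition cayley x : C := (x +i* 1)%C / (x +i* 1)^*%C.

Lemma cayley_circle x : on_circle (cayley x).
Proof.
by rewrite /on_circle /cayley normf_div normcJ divff // normr_eq0 Im1_neq0.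
Qed.

Lemma cayley_inj : injective cayley.
Proof.
move=> x y /eqP; rewrite /cayley eqr_div ?conjc_eq0 ?Im1_neq0 //.
by move=> /eqP /(congr1 (@complex.Im R)) /=; lra.
Qed.

End Circle.

Section PositiveMatrices.
Variable R : realType.
Local Notation C := R[i].

Definition ctrmx m n (A : 'M[C]_(m, n)) : 'M[C]_(n, m) := (map_mx conjc A)^T.

Lemma ctrmxE m n (A : 'M[C]_(m, n)) i j : ctrmx A i j = (A j i)^*%C.
Proof. by rewrite !mxE. Qed.

Lemma ctrmxK m n (A : 'M[C]_(m, n)) : ctrmx (ctrmx A) = A.
Proof. by apply/matrixP => i j; rewrite !ctrmxE conjcK. Qed.

Lemma ctrmx_mul m n p (A : 'M[C]_(m, n)) (B : 'M[C]_(n, p)) :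
  ctrmx (A *m B) = ctrmx B *m ctrmx A.
Proof. by rewrite /ctrmx map_mxM trmx_mul. Qed.

Lemma ctrmxD m n (A B : 'M[C]_(m, n)) : ctrmx (A + B) = ctrmx A + ctrmx B.
Proof. by apply/matrixP => i j; rewrite !mxE rmorphD. Qed.

Lemma ctrmxZ m n a (A : 'M[C]_(m, n)) : ctrmx (a *: A) = a^*%C *: ctrmx A.
Proof. by apply/matrixP => i j; rewrite !mxE rmorphM. Qed.

Definition qform n (A : 'M[C]_n) (v : 'cV[C]_n) : C := (ctrmx v *m A *m v) 0 0.

Lemma psd_hermitian n (A : 'M[C]_n) : psd A -> ctrmx A = A.
Proof. by case. Qed.

Lemma psd_qform_ge0 n (A : 'M[C]_n) v : psd A -> 0 <= qform A v.
Proof. by case=> _ /(_ v). Qed.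

Lemma psd_mul_ctrmx m n (B : 'M[C]_(n, m)) : psd (B *m ctrmx B).
Proof.
split; first by rewrite /adjmx -/(ctrmx _) ctrmx_mul ctrmxK.
move=> v; rewrite -/(ctrmx v) -!mulmxA mulmxA.
have -> : ctrmx v *m B = ctrmx (ctrmx B *m v) by rewrite ctrmx_mul ctrmxK.
rewrite [X in 0 <= X]mxE sumr_ge0 // => k _.
by rewrite ctrmxE mulrC mulcJ_ge0.
Qed.

Lemma hermitian_form_conj n (A : 'M[C]_n) (u v : 'cV[C]_n) : ctrmx A = A ->
  (ctrmx v *m A *m u) 0 0 = ((ctrmx u *m A *m v) 0 0)^*%C.
Proof.
by move=> hA; rewrite -ctrmxE !ctrmx_mul ctrmxK hA mulmxA.
Qed.

Lemma qform_sum n k (c : 'I_k -> C) (t : 'I_k -> 'M[C]_n) v :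
  qform (\sum_j c j *: t j) v = \sum_j c j * qform (t j) v.
Proof.
rewrite /qform mulmx_sumr mulmx_suml summxE; apply: eq_bigr => j _.
by rewrite -scalemxAr -scalemxAl mxE.
Qed.

Lemma psd_qform_eq0 n (A : 'M[C]_n) v : psd A -> qform A v = 0 -> A *m v = 0.
Proof.
move=> psdA qv0; have hA := psd_hermitian psdA.
have cross (u : 'cV[C]_n) : (ctrmx u *m A *m v) 0 0 = 0.
  set b := (ctrmx u *m A *m v) 0 0; set q := qform A u.
  have q_ge0 : 0 <= q := psd_qform_ge0 u psdA.
  have q1_gt0 : 0 < q + 1 := ltr_wpDl q_ge0 ltr01.
  pose s := - b / (q + 1).
  have sJ : s^*%C = - b^*%C / (q + 1).
    by rewrite /s rmorphM rmorphN fmorphV rmorphD rmorph1 /= (ger0_conjc q_ge0).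
  have expand : qform A (v + s *: u) = - (b * b^*%C * ((q + 2) / (q + 1) ^+ 2)).
    rewrite /qform ctrmxD ctrmxZ !mulmxDl !mulmxDr -!scalemxAl -!scalemxAr.
    rewrite -trace_mx11 !mxtraceD !mxtraceZ !trace_mx11 -/(qform A v) -/q -/b qv0.
    rewrite (hermitian_form_conj u v hA) -/b -[(ctrmx u *m A *m u) 0 0]/q sJ /s.
    by field; exact: lt0r_neq0.
  have := psd_qform_ge0 (v + s *: u) psdA.
  rewrite expand oppr_ge0 pmulr_lle0; last by rewrite divr_gt0 ?exprn_gt0 ?ltr_wpDl.
  move=> bb_le0; have /eqP : b * b^*%C = 0 by apply/eqP; rewrite eq_le bb_le0 mulcJ_ge0.
  by rewrite mulf_eq0 conjc_eq0 orbb => /eqP.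
apply/matrixP => i j; rewrite (ord1 j) [RHS]mxE -(cross (delta_mx i 0)).
have -> : ctrmx (delta_mx i 0) = delta_mx 0 i :> 'M[C]_(1, n).
  by apply/matrixP => a c; rewrite ctrmxE !mxE rmorph_nat andbC.
by rewrite -mulmxA -rowE [RHS]mxE.
Qed.

Lemma psd_sum_mulmx_eq0 n k (c : 'I_k -> C) (t : 'I_k -> 'M[C]_n) (v : 'cV[C]_n) j :
  (forall l, psd (t l)) -> (forall l, 0 <= c l) ->
  (\sum_l c l *: t l) *m v = 0 -> c j != 0 -> t j *m v = 0.
Proof.
move=> t_psd c_ge0 sum_v0 cj0; apply: psd_qform_eq0 (t_psd j) _.
have terms_ge0 l : true -> 0 <= c l * qform (t l) v.
  by move=> _; rewrite mulr_ge0 ?psd_qform_ge0.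
have : \sum_l c l * qform (t l) v = 0.
  by rewrite -qform_sum /qform -mulmxA sum_v0 mulmx0 mxE.
move=> /(psumr_eq0P terms_ge0) /(_ j isT) /eqP.
by rewrite mulf_eq0 (negbTE cj0) => /eqP.
Qed.

End PositiveMatrices.

Section Xi.
Variable R : realType.
Local Notation C := R[i].
Implicit Types z : C.

Definition xi_col n z : 'cV[C]_n := \col_(i < n) z^*%C ^+ i.

Lemma xi_gram n z : on_circle z -> xi n z = xi_col n z *m ctrmx (xi_col n z).
Proof.
move=> zS; apply/matrixP => i j; rewrite !mxE big_ord1 ctrmxE !mxE.
rewrite rmorphXn /= conjcK (circle_conj zS) exprVn expfzDr ?circle_neq0 //.
by rewrite -exprnN mulrC.
Qed.

Definition kvec n (i j : 'I_n) z : 'cV[C]_n := delta_mx j 0 - z *: delta_mx i 0.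

Lemma mulmx_kvec n (A : 'M[C]_n) i j z l : (A *m kvec i j z) l 0 = A l j - z * A l i.
Proof. by rewrite mulmxBr -scalemxAr -!colE !mxE. Qed.

Lemma xi_kvec n (i j : 'I_n) z : z != 0 -> j = i.+1 :> nat -> xi n z *m kvec i j z = 0.
Proof.
move=> z0 ji; apply/matrixP => l c; rewrite (ord1 c) mulmx_kvec !mxE ji.
by rewrite intS -addrA expfzDr // expr1z subrr.
Qed.

End Xi.

Theorem corollary7p7 (R : realType) (n : nat) (hn : (2 <= n)%N) :
  (forall z : R[i], on_circle z -> psd (xi n z)) /\
  ~ (exists (k : nat) (t : 'I_k -> 'M[R[i]]_n) (f : 'I_k -> R[i] -> R[i]),
       (forall j, toeplitz (t j) /\ psd (t j)) /\
       (forall j, trig_poly n (f j) /\ forall z, on_circle z -> 0 <= f j z) /\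
       (forall z, on_circle z -> xi n z = \sum_(j < k) f j z *: t j)).
Proof.
split=> [z /xi_gram -> | [k [t [f [t_psd [f_ge0 xi_sum]]]]]]; first exact: psd_mul_ctrmx.
pose i0 : 'I_n := Ordinal (ltnW hn); pose i1 : 'I_n := Ordinal hn.
pose slope j := t j i0 i1 / t j i0 i0.
have points_inj : injective (fun m : 'I_k.+1 => cayley (m%:R : R)).
  by move=> m m' /cayley_inj /eqP; rewrite eqr_nat => /eqP /val_inj.
have card_lt : (#|'I_k| < #|'I_k.+1|)%N by rewrite !card_ord.
have [m z_avoids] := exists_notin_codom slope points_inj card_lt.
set z := cayley _ in z_avoids; have zS : on_circle z := cayley_circle _.
have vanish j : f j z * t j i0 i0 = 0.
  have [->|fz0] := eqVneq (f j z) 0; first by rewrite mul0r.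
  have kvec0 : (\sum_l f l z *: t l) *m kvec i0 i1 z = 0.
    by rewrite -xi_sum // xi_kvec ?circle_neq0.
  have := psd_sum_mulmx_eq0 (fun l => (t_psd l).2) (fun l => (f_ge0 l).2 z zS) kvec0 fz0.
  move=> /(congr1 (fun M : 'cV_n => M i0 0)); rewrite mulmx_kvec mxE => /eqP.
  rewrite subr_eq0 => /eqP t01; apply/eqP; rewrite mulf_eq0 (negbTE fz0) /=.
  by apply: contraNT z_avoids => t00; apply/codomP; exists j; rewrite /slope t01 mulfK.
have := congr1 (fun M : 'M_n => M i0 i0) (xi_sum z zS).
rewrite /= summxE big1 => [|j _]; last by rewrite mxE vanish.
by rewrite mxE subrr expr0z => /eqP; rewrite oner_eq0.
Qed.
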